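(* Let $r\in\mathcal R$ be a universal proper distance matrix and let $(\mathcal U_r,\rho_r)$ be the completion of the metric space $(\mathbb N,r)$. Then for any enumeration $u_1,u_2,\dots$ of a countable everywhere dense subset of $\mathcal U_r$, the distance matrix $\{\rho_r(u_i,u_j)\}_{i,j\ge1}$ is a universal distance matrix.
   Context: $\mathcal R$ is the set of infinite real matrices $r=\{r_{i,j}\}_{i,j\ge1}$ with $r_{i,i}=0$, $r_{i,j}\ge0$, $r_{i,j}=r_{j,i}$, $r_{i,k}+r_{k,j}\ge r_{i,j}$; $r$ is proper if $r_{i,j}>0$ for $i\ne j$; $p_n(r)$ is the upper-left $n\times n$ corner. For an $n\times n$ distance matrix $q$, $A(q)=\{a\in\mathbb R^n:|a_i-a_j|\le q_{i,j}\le a_i+a_j\ \forall i,j\}$. A proper $r\in\mathcal R$ is universal if for every $n$, every $a\in A(p_n(r))$ and every $\epsilon>0$ there is $m\in\mathbb N$ with $\max_{1\le i\le n}|r_{i,m}-a_i|<\epsilon$. *)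

(* concrete reals R. Indices start at 0 instead of 1. *)
From Stdlib Require Import Reals.
Open Scope R_scope.

Definition dist_matrix (r : nat -> nat -> R) : Prop :=
  (forall i, r i i = 0) /\
  (forall i j, 0 <= r i j) /\
  (forall i j, r i j = r j i) /\
  (forall i j k, r i k + r k j >= r i j).

Definition proper (r : nat -> nat -> R) : Prop :=
  forall i j, i <> j -> r i j > 0.

(* a (its first n coordinates a 0 .. a (n-1)) belongs to A(p_n(r)) *)
Definition in_A (n : nat) (r : nat -> nat -> R) (a : nat -> R) : Prop :=
  forall i j, (i < n)%nat -> (j < n)%nat ->
    Rabs (a i - a j) <= r i j /\ r i j <= a i + a j.

Definition universal (r : nat -> nat -> R) : Prop :=
  dist_matrix r /\ proper r /\
  forall (n : nat) (a : nat -> R), in_A n r a ->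
    forall eps : R, eps > 0 ->
      exists m : nat, forall i, (i < n)%nat -> Rabs (r i m - a i) < eps.

Definition is_metric {X : Type} (d : X -> X -> R) : Prop :=
  (forall x y, 0 <= d x y) /\
  (forall x y, d x y = 0 <-> x = y) /\
  (forall x y, d x y = d y x) /\
  (forall x y z, d x z <= d x y + d y z).

Definition cauchy_seq {X : Type} (d : X -> X -> R) (s : nat -> X) : Prop :=
  forall eps, eps > 0 -> exists N, forall p q, (N <= p)%nat -> (N <= q)%nat ->
    d (s p) (s q) < eps.

Definition converges_to {X : Type} (d : X -> X -> R) (s : nat -> X) (l : X) : Prop :=
  forall eps, eps > 0 -> exists N, forall p, (N <= p)%nat -> d (s p) l < eps.

Definition complete_metric {X : Type} (d : X -> X -> R) : Prop :=
  forall s, cauchy_seq d s -> exists l, converges_to d s l.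

Definition dense_range {X : Type} (d : X -> X -> R) (s : nat -> X) : Prop :=
  forall x eps, eps > 0 -> exists i, d x (s i) < eps.

Definition is_completion (r : nat -> nat -> R) {X : Type} (d : X -> X -> R)
  (e : nat -> X) : Prop :=
  is_metric d /\ complete_metric d /\
  (forall i j, d (e i) (e j) = r i j) /\ dense_range d e.

(* Every a in A(p_n(rho)) extends, by the McShane formula
   f(x) = min_i (a_i + rho(u_i, x)), to a Katetov function f on the whole
   completion, with f(u_i) = a_i.  Its restriction to the copy of (N, r) lies
   in every A(p_N(r)), so universality of r realizes f up to a small error at
   some point of (N, r), i.e. near finitely many points e_k approximating the
   u_i; by density, a nearby u_M then realizes a up to eps. *)

From Stdlib Require Import Reals Lra Lia.
Open Scope R_scope.

Lemma Rabs_le_between (x a : R) : Rabs x <= a -> - a <= x <= a.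
Proof.
  intros H; pose proof (Rle_abs x); pose proof (Rle_abs (- x)).
  rewrite Rabs_Ropp in *; lra.
Qed.

Lemma bounded_witnesses (P : nat -> nat -> Prop) (n : nat) :
  (forall i, (i < n)%nat -> exists k, P i k) ->
  exists N, forall i, (i < n)%nat -> exists k, (k < N)%nat /\ P i k.
Proof.
  induction n as [|n IH]; intros H.
  - exists O; intros; lia.
  - destruct IH as [N HN]; [intros i Hi; apply H; lia|].
    destruct (H n ltac:(lia)) as [k Hk].
    exists (S (N + k)); intros i Hi.
    destruct (Nat.eq_dec i n) as [->|Hne].
    + exists k; split; [lia|exact Hk].
    + destruct (HN i ltac:(lia)) as [k' [Hk' Pk']].
      exists k'; split; [lia|exact Pk'].
Qed.

Fixpoint min_upto (p : nat) (f : nat -> R) : R :=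
  match p with
  | O => f O
  | S q => Rmin (min_upto q f) (f (S q))
  end.

Lemma min_upto_le (p : nat) (f : nat -> R) (i : nat) :
  (i <= p)%nat -> min_upto p f <= f i.
Proof.
  revert i; induction p as [|p IH]; intros i Hi; simpl.
  - replace i with O by lia; lra.
  - destruct (Nat.eq_dec i (S p)) as [->|Hne].
    + apply Rmin_r.
    + eapply Rle_trans; [apply Rmin_l|]. apply IH; lia.
Qed.

Lemma min_upto_attained (p : nat) (f : nat -> R) :
  exists i, (i <= p)%nat /\ min_upto p f = f i.
Proof.
  induction p as [|p [i [Hi Ei]]]; simpl.
  - exists O; split; [lia|reflexivity].
  - destruct (Rle_dec (min_upto p f) (f (S p))).
    + exists i; split; [lia|]. rewrite Rmin_left; assumption.
    + exists (S p); split; [lia|]. rewrite Rmin_right; lra.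
Qed.

(* Katetov functions on (X, d) are the one-point metric extensions of X: f x is
   the distance from x to a new point.  On a finite point set this is exactly
   membership in A(q). *)
Definition katetov {X : Type} (d : X -> X -> R) (f : X -> R) : Prop :=
  forall x y, Rabs (f x - f y) <= d x y /\ d x y <= f x + f y.

Lemma katetov_in_A {X : Type} (d : X -> X -> R) (f : X -> R)
  (r : nat -> nat -> R) (e : nat -> X) (N : nat) :
  katetov d f -> (forall i j, d (e i) (e j) = r i j) ->
  in_A N r (fun k => f (e k)).
Proof. intros Hf He i j _ _; rewrite <- He; apply Hf. Qed.

Section Metric.

Variables (X : Type) (d : X -> X -> R).
Hypothesis Hd : is_metric d.

Lemma dist_refl (x : X) : d x x = 0.
Proof. apply Hd; reflexivity. Qed.

Lemma dist_comm (x y : X) : d x y = d y x.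
Proof. apply Hd. Qed.

Lemma dist_triangle (x y z : X) : d x z <= d x y + d y z.
Proof. apply Hd. Qed.

Lemma dist_lipschitz_r (z x y : X) : Rabs (d z x - d z y) <= d x y.
Proof.
  pose proof (dist_triangle z x y); pose proof (dist_triangle z y x).
  rewrite (dist_comm y x) in *; apply Rabs_le; lra.
Qed.

Lemma pullback_dist_matrix (u : nat -> X) :
  dist_matrix (fun i j => d (u i) (u j)).
Proof.
  split; [|split; [|split]]; intros.
  - apply dist_refl.
  - apply Hd.
  - apply dist_comm.
  - pose proof (dist_triangle (u i) (u k) (u j)); lra.
Qed.

Lemma pullback_proper (u : nat -> X) :
  (forall i j, u i = u j -> i = j) -> proper (fun i j => d (u i) (u j)).
Proof.
  intros Hinj i j Hij.
  destruct (Rle_lt_or_eq_dec 0 (d (u i) (u j))) as [H|H]; [apply Hd|lra|].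
  exfalso; apply Hij, Hinj, Hd; auto.
Qed.

Section McShane.

Variables (u : nat -> X) (p : nat) (a : nat -> R).

Definition mcshane (x : X) : R := min_upto p (fun i => a i + d (u i) x).

Lemma mcshane_le (i : nat) (x : X) :
  (i <= p)%nat -> mcshane x <= a i + d (u i) x.
Proof. intros Hi; exact (min_upto_le p (fun i => a i + d (u i) x) i Hi). Qed.

Lemma mcshane_attained (x : X) :
  exists q, (q <= p)%nat /\ mcshane x = a q + d (u q) x.
Proof. apply min_upto_attained. Qed.

Lemma mcshane_lipschitz (x y : X) : mcshane x - mcshane y <= d x y.
Proof.
  destruct (mcshane_attained y) as [q [Hq ->]].
  pose proof (mcshane_le q x Hq); pose proof (dist_triangle (u q) y x).
  rewrite (dist_comm y x) in *; lra.
Qed.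

Hypothesis Ha : in_A (S p) (fun i j => d (u i) (u j)) a.

Lemma mcshane_ge (i : nat) (x : X) :
  (i <= p)%nat -> a i - d (u i) x <= mcshane x.
Proof.
  intros Hi; destruct (mcshane_attained x) as [q [Hq ->]].
  destruct (Ha q i ltac:(lia) ltac:(lia)) as [Haqi _].
  apply Rabs_le_between in Haqi.
  pose proof (dist_triangle (u q) x (u i)); rewrite (dist_comm x (u i)) in *.
  lra.
Qed.

Lemma mcshane_katetov : katetov d mcshane.
Proof.
  intros x y; split.
  - pose proof (mcshane_lipschitz x y); pose proof (mcshane_lipschitz y x).
    rewrite (dist_comm y x) in *; apply Rabs_le; lra.
  - destruct (mcshane_attained x) as [q [Hq ->]].
    destruct (mcshane_attained y) as [q' [Hq' ->]].
    destruct (Ha q q' ltac:(lia) ltac:(lia)) as [_ Hqq'].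
    pose proof (dist_triangle x (u q) y); pose proof (dist_triangle (u q) (u q') y).
    rewrite (dist_comm x (u q)) in *; lra.
Qed.

Lemma mcshane_at (i : nat) : (i <= p)%nat -> mcshane (u i) = a i.
Proof.
  intros Hi; pose proof (mcshane_le i (u i) Hi); pose proof (mcshane_ge i (u i) Hi).
  rewrite dist_refl in *; lra.
Qed.

End McShane.

Section Realization.

Variables (r : nat -> nat -> R) (e : nat -> X).
Hypotheses (Hr : universal r) (He : forall i j, d (e i) (e j) = r i j)
  (He_dense : dense_range d e).

(* Pass from x i to a nearby e k, realize f on the e k by universality, then
   move to a nearby u M: four errors of size eps / 4. *)
Lemma katetov_realized_near (u : nat -> X) (f : X -> R) (n : nat) (x : nat -> X)
  (eps : R) :
  dense_range d u -> katetov d f -> eps > 0 ->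
  exists M, forall i, (i < n)%nat -> Rabs (d (x i) (u M) - f (x i)) < eps.
Proof.
  intros Hu Hf Heps.
  set (delta := eps / 4); assert (Hdelta : delta > 0) by (unfold delta; lra).
  destruct (bounded_witnesses (fun i k => d (x i) (e k) < delta) n) as [N HN].
  { intros i _; exact (He_dense (x i) delta Hdelta). }
  destruct Hr as [_ [_ Hr_univ]].
  destruct (Hr_univ N (fun k => f (e k)) (katetov_in_A d f r e N Hf He)
              delta Hdelta) as [m Hm].
  destruct (Hu (e m) delta Hdelta) as [M HM].
  exists M; intros i Hi.
  destruct (HN i Hi) as [k [Hk Hxk]].
  pose proof (Rabs_le_between _ _ (dist_lipschitz_r (x i) (u M) (e m))) as H1.
  pose proof (Rabs_le_between _ _ (dist_lipschitz_r (e m) (x i) (e k))) as H2.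
  pose proof (Rabs_def2 _ _ (Hm k Hk)) as H3.
  pose proof (Rabs_le_between _ _ (proj1 (Hf (e k) (x i)))) as H4.
  rewrite <- He, (dist_comm (e m) (x i)), (dist_comm (e m) (e k)) in *.
  rewrite (dist_comm (u M) (e m)), (dist_comm (e k) (x i)) in *.
  apply Rabs_def1; unfold delta in *; lra.
Qed.

End Realization.

End Metric.

Theorem lemma6 (r : nat -> nat -> R) (Hr : universal r)
  (X : Type) (d : X -> X -> R) (e : nat -> X) (Hcompl : is_completion r d e)
  (u : nat -> X) (Hinj : forall i j, u i = u j -> i = j)
  (Hdense : dense_range d u) :
  universal (fun i j => d (u i) (u j)).
Proof.
  destruct Hcompl as [Hd [_ [He He_dense]]].
  split; [|split].
  - exact (pullback_dist_matrix X d Hd u).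
  - exact (pullback_proper X d Hd u Hinj).
  - intros n a Ha eps Heps.
    destruct n as [|p]; [exists O; intros; lia|].
    destruct (katetov_realized_near X d Hd r e Hr He He_dense u
                (mcshane X d u p a) (S p) u eps Hdense
                (mcshane_katetov X d Hd u p a Ha) Heps) as [M HM].
    exists M; intros i Hi.
    rewrite <- (mcshane_at X d Hd u p a Ha i) by lia.
    exact (HM i Hi).
Qed.
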